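(* In the setting below, for every $m\in\mathbb N$ with $1\le m\le \ell N$, $$\mathbb E\,S(\widetilde{a_m})\le(8+16C_G)\,\mathbb E\,S(a_m).$$
   Context: Let $n,N\in\mathbb N$, $I=\{1,\dots,n\}$, $J=\{1,\dots,N\}$, $G$ a nonempty finite set of maps $I\to J$, $\mathbb P$ the normalized counting measure on $G$ ($\mathbb P(E)=|E|/|G|$) and $\mathbb E$ its expectation. Assume there is a constant $C_G\ge1$ such that for all $i\in I,j\in J$, $\mathbb P(g(i)=j)=1/N$, and for all pairs $(i_1,j_1)\ne(i_2,j_2)$ in $I\times J$, $\mathbb P(g(i_1)=j_1,g(i_2)=j_2)\le C_G/N^2$. Fix an integer $1\le\ell\le n$ and a matrix $a\in\mathbb R^{n\times N}$ with non-negative entries, and let $h:\{1,\dots,nN\}\to I\times J$ be a bijection with $a(h(j))\ge a(h(j+1))$ for $1\le j<\ell N$ and $a(h(j))=0$ for $\ell N<j\le nN$ (for a matrix $b$, $b(i,j)=b_{ij}$). Let $\mathcal A_h$ be the set of non-negative $n\times N$ matrices $b$ with $b(h(j))\ge b(h(j+1))$ for $1\le j<\ell N$ and $b(h(j))=0$ for $\ell N<j\le nN$. For $b\in\mathcal A_h$ let $\widetilde b$ be the matrix with $\widetilde b(h(j))=\big(\frac1{\ell N}\sum_{i=1}^{\ell N}b(h(i))\big)\mathbb 1_{\{1,\dots,\ell N\}}(j)$ for $1\le j\le nN$. For $1\le m\le nN$ let $a_m$ be the matrix with $a_m(h(k))=\mathbb 1_{\{1,\dots,m\}}(k)$. For $b\in\mathcal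 A_h$ and $g\in G$ let $S_k(b)(g)$ be the $k$-th largest (with multiplicity) of the numbers $b_{1g(1)},\dots,b_{ng(n)}$, and $S(b)(g)=\sum_{k=1}^{\ell}S_k(b)(g)$. *)

From HB Require Import structures.
From mathcomp Require Import all_boot all_order all_algebra.
Set Implicit Arguments. Unset Strict Implicit. Unset Printing Implicit Defensive.
Import Order.TTheory GRing.Theory Num.Theory.
Local Open Scope ring_scope.

(* Indices are 0-based: I = 'I_n, J = 'I_N, {1..nN} = 'I_(n*N). *)

Section Defs.
Variable R : realFieldType.
Variables n N : nat.

Definition Prob (G : {set {ffun 'I_n -> 'I_N}}) (E : pred {ffun 'I_n -> 'I_N}) : R :=
  #|[set g in G | E g]|%:R / #|G|%:R.

Definition Expect (G : {set {ffun 'I_n -> 'I_N}}) (X : {ffun 'I_n -> 'I_N} -> R) : R :=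
  (\sum_(g in G) X g) / #|G|%:R.

Definition sorted_vals (b : 'M[R]_(n, N)) (g : {ffun 'I_n -> 'I_N}) : seq R :=
  sort (fun x y : R => y <= x) [seq b i (g i) | i <- enum 'I_n].

Definition Sk (b : 'M[R]_(n, N)) (k : nat) (g : {ffun 'I_n -> 'I_N}) : R :=
  nth 0 (sorted_vals b g) k.-1.

Definition Ssum (l : nat) (b : 'M[R]_(n, N)) (g : {ffun 'I_n -> 'I_N}) : R :=
  \sum_(1 <= k < l.+1) Sk b k g.

(* a_m : a_m(h(k)) = 1 if k in {1..m} (0-based: k < m), 0 otherwise *)
Definition a_m (h : 'I_(n * N) -> 'I_n * 'I_N) (m : nat) : 'M[R]_(n, N) :=
  \matrix_(i, j) (if [exists k : 'I_(n * N), (h k == (i, j)) && (k < m)%N]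
                  then 1 else 0).

Definition tilde (h : 'I_(n * N) -> 'I_n * 'I_N) (l : nat) (b : 'M[R]_(n, N))
  : 'M[R]_(n, N) :=
  let avg := (\sum_(k : 'I_(n * N) | (k < l * N)%N) b (h k).1 (h k).2)
               / (l * N)%:R in
  \matrix_(i, j) (if [exists k : 'I_(n * N), (h k == (i, j)) && (k < l * N)%N]
                  then avg else 0).
End Defs.

From HB Require Import structures.
From mathcomp Require Import all_boot all_order all_algebra.
From mathcomp Require Import ring lra.
Set Implicit Arguments. Unset Strict Implicit. Unset Printing Implicit Defensive.
Import Order.TTheory GRing.Theory Num.Theory.
Local Open Scope ring_scope.

(* Let X(g) = sum_i a_m(i, g i) count the m marked cells hit by g, and p = m/N.
   Since tilde(a_m) is non-negative with total mass m, the top-l sum of its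
   values is at most their full sum, whose mean is p.  Since a_m is 0/1, its
   top-l sum is min(X, l) >= t X - t^2 X^2 / (4 l); the pair bound gives
   E X^2 <= p + C_G p^2 while E X = p, and t = 1/(1 + C_G) makes the right-hand
   side at least p / (8 + 16 C_G) because p <= l. *)

Section SortedPrefix.
Variable R : realFieldType.
Implicit Types (s : seq R) (l : nat).

Lemma big_nth_pad s L : (size s <= L)%N ->
  \sum_(x <- s) x = \sum_(0 <= k < L) nth 0 s k.
Proof.
move=> hL; rewrite (big_nth 0) (big_cat_nat (leq0n _) hL) /=.
rewrite [X in _ + X]big1_seq ?addr0 // => k.
by rewrite mem_index_iota => /andP[_ /andP[hk _]]; rewrite nth_default.
Qed.

Lemma prefix_sum_le s l : all (fun x => 0 <= x) s ->
  \sum_(0 <= k < l) nth 0 s k <= \sum_(x <- s) x.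
Proof.
move=> s_ge0; rewrite (@big_nth_pad s (l + size s)) ?leq_addl //.
rewrite (big_cat_nat (leq0n _) (leq_addr (size s) l)) /= lerDl.
apply: sumr_ge0 => k _; case: (ltnP k (size s)) => hk.
  by apply: (allP s_ge0); rewrite mem_nth.
by rewrite nth_default.
Qed.

Lemma nth_sorted_ge s i j :
  all (fun x => 0 <= x) s -> sorted (fun x y => y <= x) s -> (i <= j)%N ->
  nth 0 s j <= nth 0 s i.
Proof.
move=> s_ge0 s_sorted ij; case: (ltnP j (size s)) => hj; last first.
  rewrite [nth 0 s j]nth_default //; case: (ltnP i (size s)) => hi.
    by apply: (allP s_ge0); rewrite mem_nth.
  by rewrite nth_default.
apply: (sorted_leq_nth _ _ 0 s_sorted) => //; last exact: leq_ltn_trans ij hj.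
by move=> x y z /[swap]; apply: le_trans.
Qed.

(* Decided by the [l]-th term: if it is [0], the prefix already contains every
   [1] of [s]; if it is [1], the prefix consists of ones only. *)
Lemma min_le_prefix_sum01 s l : (0 < l)%N ->
  sorted (fun x y => y <= x) s -> all (fun x => (x == 0) || (x == 1)) s ->
  Num.min (\sum_(x <- s) x) l%:R <= \sum_(0 <= k < l) nth 0 s k.
Proof.
move=> l_gt0 s_sorted s01.
have nth01 k : (nth 0 s k == 0) || (nth 0 s k == 1).
  case: (ltnP k (size s)) => hk; first by apply: (allP s01); rewrite mem_nth.
  by rewrite nth_default ?eqxx.
have s_ge0 : all (fun x => 0 <= x) s.
  by apply: sub_all s01 => x /orP[] /eqP ->; rewrite ?ler01.
have mono i j := @nth_sorted_ge s i j s_ge0 s_sorted.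
case/orP: (nth01 l.-1) => /eqP last_l.
- have tail0 k : (l <= k)%N -> nth 0 s k = 0.
    move=> lk; have := mono _ _ (leq_trans (leq_pred l) lk).
    by case/orP: (nth01 k) => /eqP ->; rewrite // last_l ler10.
  suff -> : \sum_(x <- s) x = \sum_(0 <= k < l) nth 0 s k by rewrite ge_min lexx.
  rewrite (@big_nth_pad s (l + size s)) ?leq_addl //.
  rewrite (big_cat_nat (leq0n _) (leq_addr (size s) l)) /=.
  rewrite [X in _ + X]big1_seq ?addr0 // => k.
  by rewrite mem_index_iota => /andP[_ /andP[hk _]]; apply: tail0.
- have head1 k : (k < l)%N -> nth 0 s k = 1.
    move=> kl; have := mono k l.-1; rewrite -ltnS prednK // => /(_ kl).
    by case/orP: (nth01 k) => /eqP ->; rewrite // last_l ler10.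
  suff -> : \sum_(0 <= k < l) nth 0 s k = l%:R by rewrite ge_min lexx orbT.
  rewrite (eq_big_nat _ _ (F2 := fun => 1)); first by rewrite sumr_const_nat subn0.
  by move=> k /andP[_ kl]; apply: head1.
Qed.

End SortedPrefix.

Lemma sum_ord_ltn (R : pzSemiRingType) (K M : nat) : (M <= K)%N ->
  \sum_(k < K) ((k < M)%N)%:R = M%:R :> R.
Proof.
move=> MK; rewrite -(big_mkord xpredT (fun k => ((k < M)%N)%:R)).
rewrite (big_cat_nat (leq0n M) MK) /= [X in _ + X]big1_seq ?addr0 => [|k]; last first.
  by rewrite mem_index_iota => /andP[_ /andP[Mk _]]; rewrite ltnNge Mk.
rewrite -[M in RHS]subn0 -sumr_const_nat.
by apply: eq_big_nat => k /andP[_ ->].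
Qed.

Section TopSums.
Variables (R : realFieldType) (n N : nat).
Implicit Types (b : 'M[R]_(n, N)) (g : {ffun 'I_n -> 'I_N}).

Definition pick_sum b g : R := \sum_i b i (g i).

Lemma Ssum_prefix l b g :
  Ssum l b g = \sum_(0 <= k < l) nth 0 (sorted_vals b g) k.
Proof. by rewrite /Ssum big_add1. Qed.

Lemma sum_sorted_vals b g : \sum_(x <- sorted_vals b g) x = pick_sum b g.
Proof.
by rewrite /sorted_vals (perm_big _ (permEl (perm_sort _ _))) big_map big_enum.
Qed.

Lemma sorted_vals_sorted b g : sorted (fun x y => y <= x) (sorted_vals b g).
Proof. by apply: sort_sorted => x y; apply: le_total. Qed.

Lemma all_sorted_vals (P : pred R) b g :
  (forall i j, P (b i j)) -> all P (sorted_vals b g).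
Proof. by move=> bP; rewrite all_sort; apply/allP => _ /mapP[i _ ->]. Qed.

Lemma Ssum_le_pick_sum l b g :
  (forall i j, 0 <= b i j) -> Ssum l b g <= pick_sum b g.
Proof.
by move=> b_ge0; rewrite Ssum_prefix -sum_sorted_vals prefix_sum_le ?all_sorted_vals.
Qed.

Lemma min_pick_sum_le_Ssum l b g : (0 < l)%N ->
  (forall i j, (b i j == 0) || (b i j == 1)) ->
  Num.min (pick_sum b g) l%:R <= Ssum l b g.
Proof.
move=> l_gt0 b01; rewrite Ssum_prefix -sum_sorted_vals.
by rewrite min_le_prefix_sum01 ?sorted_vals_sorted ?all_sorted_vals.
Qed.

End TopSums.

(* The parabola touches the level [L] at its vertex [x = 2 L / t]. *)
Lemma quad_minorant_le_min (R : realFieldType) (t x L : R) :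
  0 < t <= 1 -> 0 <= x -> 0 < L ->
  t * x - t ^+ 2 / (4 * L) * x ^+ 2 <= Num.min x L.
Proof.
move=> /andP[t_gt0 t_le1] x_ge0 L_gt0; rewrite le_min; apply/andP; split.
  have : 0 <= t ^+ 2 / (4 * L) by rewrite divr_ge0 ?exprn_ge0 ?ltW ?mulr_gt0.
  set s := t ^+ 2 / (4 * L) => s_ge0; nra.
rewrite lerBlDr -subr_ge0.
have -> : L + t ^+ 2 / (4 * L) * x ^+ 2 - t * x = (t * x - 2 * L) ^+ 2 / (4 * L).
  by field; rewrite gt_eqF.
by rewrite divr_ge0 ?sqr_ge0 // ltW ?mulr_gt0.
Qed.

Section Expectation.
Variables (R : realFieldType) (n N : nat) (G : {set {ffun 'I_n -> 'I_N}}).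
Implicit Types (X Y : {ffun 'I_n -> 'I_N} -> R).

Lemma eq_Expect X Y : X =1 Y -> Expect G X = Expect G Y.
Proof. by move=> XY; rewrite /Expect (eq_bigr _ (fun g _ => XY g)). Qed.

Lemma ler_Expect X Y : {in G, forall g, X g <= Y g} -> Expect G X <= Expect G Y.
Proof. by move=> XY; rewrite ler_wpM2r ?invr_ge0 ?ler0n // ler_sum. Qed.

Lemma ExpectB X Y : Expect G (fun g => X g - Y g) = Expect G X - Expect G Y.
Proof. by rewrite /Expect sumrB mulrBl. Qed.

Lemma ExpectZ (c : R) X : Expect G (fun g => c * X g) = c * Expect G X.
Proof. by rewrite /Expect -mulr_sumr mulrA. Qed.

Lemma ExpectZr (c : R) X : Expect G (fun g => X g * c) = Expect G X * c.
Proof. by rewrite /Expect -mulr_suml mulrAC. Qed.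

Lemma Expect_sum (I : finType) (F : I -> {ffun 'I_n -> 'I_N} -> R) :
  Expect G (fun g => \sum_i F i g) = \sum_i Expect G (F i).
Proof. by rewrite /Expect exchange_big mulr_suml. Qed.

Lemma Expect_indicator (E : pred {ffun 'I_n -> 'I_N}) :
  Expect G (fun g => (E g)%:R) = Prob R G E.
Proof.
rewrite /Expect /Prob (eq_bigr (fun g => if E g then 1 else 0)); last first.
  by move=> g _; case: (E g).
rewrite -big_mkcondr /= sumr_const; congr (_%:R / _).
by apply: eq_card => g; rewrite !inE.
Qed.

Lemma Expect_Ssum01_ge l (b : 'M[R]_(n, N)) (t : R) : (0 < l)%N -> 0 < t <= 1 ->
  (forall i j, (b i j == 0) || (b i j == 1)) ->
  t * Expect G (pick_sum b)
    - t ^+ 2 / (4 * l%:R) * Expect G (fun g => pick_sum b g ^+ 2)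
    <= Expect G (Ssum l b).
Proof.
move=> l_gt0 t_bounds b01; rewrite -!ExpectZ -ExpectB; apply: ler_Expect => g _.
apply: le_trans (min_pick_sum_le_Ssum g l_gt0 b01).
apply: quad_minorant_le_min; rewrite ?ltr0n //.
by apply: sumr_ge0 => i _; case/orP: (b01 i (g i)) => /eqP ->.
Qed.

Variable CG : R.
Hypothesis CG_ge0 : 0 <= CG.
Hypothesis Hmarg : forall (i : 'I_n) (j : 'I_N),
  Prob R G (fun g => g i == j) = 1 / N%:R.
Hypothesis Hpair : forall (i1 i2 : 'I_n) (j1 j2 : 'I_N), (i1, j1) != (i2, j2) ->
  Prob R G (fun g => (g i1 == j1) && (g i2 == j2)) <= CG / N%:R ^+ 2.

Lemma pick_sumE (w : 'M[R]_(n, N)) g :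
  pick_sum w g = \sum_(p : 'I_n * 'I_N) (g p.1 == p.2)%:R * w p.1 p.2.
Proof.
rewrite /pick_sum -(pair_bigA _ (fun i j => (g i == j)%:R * w i j)) /=.
apply: eq_bigr => i _.
rewrite (bigD1 (g i)) //= eqxx mul1r big1 ?addr0 // => j.
by rewrite eq_sym => /negbTE ->; rewrite mul0r.
Qed.

Lemma Expect_pick_sum (w : 'M[R]_(n, N)) :
  Expect G (pick_sum w) = N%:R^-1 * \sum_(p : 'I_n * 'I_N) w p.1 p.2.
Proof.
rewrite (eq_Expect (pick_sumE w)) Expect_sum mulr_sumr; apply: eq_bigr => p _.
by rewrite ExpectZr Expect_indicator Hmarg div1r.
Qed.

Lemma Expect_pick_sum_sqr_le (w : 'M[R]_(n, N)) : (forall i j, 0 <= w i j) ->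
  Expect G (fun g => pick_sum w g ^+ 2)
    <= N%:R^-1 * \sum_(p : 'I_n * 'I_N) w p.1 p.2 ^+ 2
       + CG / N%:R ^+ 2 * (\sum_(p : 'I_n * 'I_N) w p.1 p.2) ^+ 2.
Proof.
move=> w_ge0; pose ind g (p : 'I_n * 'I_N) : R := (g p.1 == p.2)%:R.
pose wp (p : 'I_n * 'I_N) := w p.1 p.2.
have sqrE g : pick_sum w g ^+ 2 = \sum_p \sum_q ind g p * ind g q * (wp p * wp q).
  rewrite pick_sumE expr2 big_distrlr /=.
  by apply: eq_bigr => p _; apply: eq_bigr => q _; rewrite /ind /wp; ring.
have joint_le p q :
    Expect G (fun g => ind g p * ind g q) <= (p == q)%:R / N%:R + CG / N%:R ^+ 2.
  have C_ge0 : 0 <= CG / N%:R ^+ 2 by rewrite divr_ge0 ?exprn_ge0.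
  have -> : Expect G (fun g => ind g p * ind g q)
      = Prob R G (fun g => (g p.1 == p.2) && (g q.1 == q.2)).
    by rewrite -Expect_indicator; apply: eq_Expect => g; rewrite /ind -natrM mulnb.
  case: (eqVneq p q) => [<-|pq].
    rewrite /Prob (eq_card (B := [set g in G | g p.1 == p.2])); last first.
      by move=> g; rewrite !inE andbb.
    by rewrite -/(Prob R G _) Hmarg lerDl.
  by rewrite mul0r add0r Hpair // -!surjective_pairing.
rewrite (eq_Expect sqrE) Expect_sum.
apply: (@le_trans _ _ (\sum_p \sum_q
    ((p == q)%:R / N%:R + CG / N%:R ^+ 2) * (wp p * wp q))).
  apply: ler_sum => p _; rewrite Expect_sum; apply: ler_sum => q _.
  rewrite ExpectZr; apply: ler_wpM2r; last exact: joint_le.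
  by apply: mulr_ge0; apply: w_ge0.
rewrite le_eqVlt; apply/orP; left; apply/eqP.
transitivity (\sum_p (wp p ^+ 2 / N%:R + \sum_q CG / N%:R ^+ 2 * (wp p * wp q))).
  apply: eq_bigr => p _; rewrite (eq_bigr _ (fun q _ => mulrDl _ _ _)) big_split /=.
  congr (_ + _); rewrite (bigD1 p) //= eqxx /= big1 ?addr0 => [|q].
    by rewrite /wp; ring.
  by rewrite eq_sym => /negbTE ->; rewrite !mul0r.
rewrite big_split /=; congr (_ + _).
  by rewrite mulr_sumr; apply: eq_bigr => p _; rewrite mulrC.
rewrite [(\sum_p _) ^+ 2]expr2 big_distrlr mulr_sumr /=.
by apply: eq_bigr => p _; rewrite mulr_sumr.
Qed.

End Expectation.

(* With [t = 1 / (1 + C)] and [p <= L], the quadratic term is at most a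
   quarter of the linear one. *)
Lemma le_quad_lower_bound (R : realFieldType) (C L p : R) :
  1 <= C -> 1 <= L -> 0 <= p -> p <= L ->
  p <= (8 + 16 * C) * ((1 + C)^-1 * p - (1 + C)^-1 ^+ 2 / (4 * L) * (p + C * p ^+ 2)).
Proof.
move=> C_ge1 L_ge1 p_ge0 p_leL.
have C1_gt0 : 0 < 1 + C by lra.
have L_gt0 : 0 < L by lra.
set t := (1 + C)^-1.
have t_gt0 : 0 < t by rewrite invr_gt0.
have tC : t * (1 + C) = 1 by rewrite mulVf ?gt_eqF.
have tCp_le : t * (1 + C * p) <= L.
  have : 1 + C * p <= (1 + C) * L by nra.
  by move/(ler_wpM2l (ltW t_gt0)); rewrite mulrA tC mul1r.
have quad_le : t ^+ 2 / (4 * L) * (p + C * p ^+ 2) <= t * p / 4.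
  have -> : t ^+ 2 / (4 * L) * (p + C * p ^+ 2) = t * p / 4 * (t * (1 + C * p) / L).
    by field; rewrite gt_eqF.
  apply: ler_piMr; first by rewrite divr_ge0 // mulr_ge0 // ltW.
  by rewrite ler_pdivrMr // mul1r.
have lin_ge : p <= (8 + 16 * C) * (3 / 4 * (t * p)).
  have -> : (8 + 16 * C) * (3 / 4 * (t * p)) = (6 + 12 * C) * t * p by field.
  rewrite -[X in X <= _]mul1r; apply: ler_wpM2r => //.
  by rewrite -[X in X <= _]tC mulrC ler_pM2r //; lra.
apply: (le_trans lin_ge); apply: ler_wpM2l; lra.
Qed.

Section Enumeration.
Variables (R : realFieldType) (n N : nat) (h : 'I_(n * N) -> 'I_n * 'I_N).
Hypothesis h_bij : bijective h.

Lemma sum_pairs_h (F : 'I_n * 'I_N -> R) : \sum_p F p = \sum_k F (h k).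
Proof. by rewrite (reindex h) //; apply: onW_bij. Qed.

Lemma exists_h_prefix M k :
  [exists k', (h k' == ((h k).1, (h k).2)) && (k' < M)%N] = (k < M)%N.
Proof.
rewrite -surjective_pairing; apply/existsP/idP => [[k' /andP[/eqP hk' k'M]] | kM].
  by rewrite -(bij_inj h_bij hk').
by exists k; rewrite eqxx.
Qed.

Lemma a_m_h m k : a_m R h m (h k).1 (h k).2 = ((k < m)%N)%:R.
Proof. by rewrite mxE exists_h_prefix; case: (k < m)%N. Qed.

Lemma a_m01 m i j : (a_m R h m i j == 0) || (a_m R h m i j == 1).
Proof. by rewrite mxE; case: ifP; rewrite eqxx ?orbT. Qed.

Lemma a_m_ge0 m i j : 0 <= a_m R h m i j.
Proof. by case/orP: (a_m01 m i j) => /eqP ->. Qed.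

Lemma sum_a_m m : (m <= n * N)%N -> \sum_(p : 'I_n * 'I_N) a_m R h m p.1 p.2 = m%:R.
Proof.
move=> mnN; rewrite (sum_pairs_h (fun p => a_m R h m p.1 p.2)).
by rewrite (eq_bigr _ (fun k _ => a_m_h m k)) sum_ord_ltn.
Qed.

Lemma tilde_ge0 l (b : 'M[R]_(n, N)) :
  (forall i j, 0 <= b i j) -> forall i j, 0 <= tilde h l b i j.
Proof.
move=> b_ge0 i j; rewrite mxE; case: ifP => // _.
by rewrite divr_ge0 ?sumr_ge0.
Qed.

Lemma sum_tilde_a_m l m : (0 < m)%N -> (m <= l * N)%N -> (l <= n)%N ->
  \sum_(p : 'I_n * 'I_N) tilde h l (a_m R h m) p.1 p.2 = m%:R.
Proof.
move=> m_gt0 m_le l_le; have lN_le : (l * N <= n * N)%N by rewrite leq_mul2r l_le orbT.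
have prefix_mass : \sum_(k < n * N | (k < l * N)%N) a_m R h m (h k).1 (h k).2 = m%:R.
  rewrite big_mkcond -(sum_ord_ltn R (leq_trans m_le lN_le)); apply: eq_bigr => k _.
  rewrite a_m_h; case: (ltnP k (l * N)) => // lNk.
  by rewrite ltnNge (leq_trans m_le lNk).
rewrite (sum_pairs_h (fun p => tilde h l (a_m R h m) p.1 p.2)).
under eq_bigr do rewrite mxE exists_h_prefix /= prefix_mass.
pose avg : R := m%:R / (l * N)%:R.
rewrite (eq_bigr (fun k : 'I_(n * N) => ((k < l * N)%N)%:R * avg)) => [|k _].
  rewrite -mulr_suml sum_ord_ltn // mulrC divfK // pnatr_eq0 -lt0n.
  exact: leq_trans m_le.
by case: (k < l * N)%N; rewrite ?mul1r ?mul0r.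
Qed.
End Enumeration.

Section IndicatorMoments.
Variables (R : realFieldType) (n N : nat) (G : {set {ffun 'I_n -> 'I_N}}) (CG : R).
Hypothesis CG_ge0 : 0 <= CG.
Hypothesis Hmarg : forall (i : 'I_n) (j : 'I_N),
  Prob R G (fun g => g i == j) = 1 / N%:R.
Hypothesis Hpair : forall (i1 i2 : 'I_n) (j1 j2 : 'I_N), (i1, j1) != (i2, j2) ->
  Prob R G (fun g => (g i1 == j1) && (g i2 == j2)) <= CG / N%:R ^+ 2.
Variables (h : 'I_(n * N) -> 'I_n * 'I_N) (m : nat).
Hypotheses (h_bij : bijective h) (m_le : (m <= n * N)%N) (N_gt0 : (0 < N)%N).

Lemma Expect_pick_sum_a_m : Expect G (pick_sum (a_m R h m)) = m%:R / N%:R.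
Proof. by rewrite (Expect_pick_sum Hmarg) sum_a_m // mulrC. Qed.

Lemma Expect_pick_sum_a_m_sqr_le :
  Expect G (fun g => pick_sum (a_m R h m) g ^+ 2)
    <= m%:R / N%:R + CG * (m%:R / N%:R) ^+ 2.
Proof.
apply: le_trans (Expect_pick_sum_sqr_le CG_ge0 Hmarg Hpair (a_m_ge0 R h m)) _.
have a_m_sqr q : a_m R h m q.1 q.2 ^+ 2 = a_m R h m q.1 q.2.
  by case/orP: (a_m01 R h m q.1 q.2) => /eqP ->; rewrite ?expr0n ?expr1n.
rewrite (eq_bigr _ (fun q _ => a_m_sqr q)) sum_a_m // le_eqVlt; apply/orP; left.
by apply/eqP; field; rewrite pnatr_eq0 -lt0n.
Qed.

End IndicatorMoments.

Theorem lemma3p4 (R : realFieldType) (n N : nat)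
  (G : {set {ffun 'I_n -> 'I_N}}) (CG : R)
  (HG0 : G != set0)
  (HCG : 1 <= CG)
  (Hmarg : forall (i : 'I_n) (j : 'I_N),
      Prob R G (fun g => g i == j) = 1 / N%:R)
  (Hpair : forall (i1 i2 : 'I_n) (j1 j2 : 'I_N), (i1, j1) != (i2, j2) ->
      Prob R G (fun g => (g i1 == j1) && (g i2 == j2)) <= CG / (N%:R ^+ 2))
  (l : nat) (Hl1 : (1 <= l)%N) (Hln : (l <= n)%N)
  (a : 'M[R]_(n, N)) (Ha0 : forall i j, 0 <= a i j)
  (h : 'I_(n * N) -> 'I_n * 'I_N) (Hh : bijective h)
  (Hdec : forall j k : 'I_(n * N), (k : nat) = j.+1 -> (k < l * N)%N ->
      a (h k).1 (h k).2 <= a (h j).1 (h j).2)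
  (Hzero : forall j : 'I_(n * N), (l * N <= j)%N -> a (h j).1 (h j).2 = 0)
  (m : nat) (Hm1 : (1 <= m)%N) (Hm : (m <= l * N)%N) :
  Expect G (Ssum l (tilde h l (a_m R h m)))
    <= (8 + 16 * CG) * Expect G (Ssum l (a_m R h m)).
Proof.
have N_gt0 : (0 < N)%N by move: (leq_trans Hm1 Hm); rewrite muln_gt0 => /andP[].
have mnN : (m <= n * N)%N by apply: leq_trans Hm _; rewrite leq_mul2r Hln orbT.
have CG_ge0 : 0 <= CG by apply: le_trans HCG.
set p : R := m%:R / N%:R.
have upper : Expect G (Ssum l (tilde h l (a_m R h m))) <= p.
  have tilde_a_m_ge0 := tilde_ge0 h l (a_m_ge0 R h m).
  apply: le_trans (ler_Expect (fun g _ => Ssum_le_pick_sum l g tilde_a_m_ge0)) _.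
  by rewrite (Expect_pick_sum Hmarg) sum_tilde_a_m // mulrC.
have t_bounds : 0 < (1 + CG)^-1 <= 1 by rewrite invr_gt0 invf_le1; lra.
have := Expect_Ssum01_ge G Hl1 t_bounds (a_m01 R h m).
rewrite Expect_pick_sum_a_m // => lower.
apply: le_trans upper (le_trans (le_quad_lower_bound (L := l%:R) HCG _ _ _) _).
- by rewrite ler1n.
- by rewrite divr_ge0.
- by rewrite /p ler_pdivrMr ?ltr0n // -natrM ler_nat.
apply: ler_wpM2l; first lra.
apply: le_trans lower; rewrite lerD2l lerN2; apply: ler_wpM2l.
  by rewrite divr_ge0 ?sqr_ge0 ?mulr_ge0 ?ler0n.
exact: (Expect_pick_sum_a_m_sqr_le CG_ge0 Hmarg Hpair Hh mnN N_gt0).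
Qed.
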